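(* Let $0\ne f\in F(\mathfrak B)$ belong to an irreducible $GL$-submodule isomorphic to $W(\lambda_1,\lambda_2)$. Then for every partition $\mu=(\mu_1,\mu_2)$ with $\mu_2\ge\lambda_1$ and every admissible $j$ (i.e. $0\le j\le\mu_1-\mu_2$), the identity $w^{(j)}_\mu=0$ is a consequence of $f=0$, i.e. $w^{(j)}_\mu$ lies in the T-ideal of $F(\mathfrak B)$ generated by $f$. In particular $(y_1z_2-y_2z_1)^{\lambda_1}$ lies in this T-ideal.
   Context: $K$ is a field of characteristic $0$. $\mathfrak B$ is the variety of bicommutative algebras (identities $(x_1x_2)x_3=(x_1x_3)x_2$, $x_1(x_2x_3)=x_2(x_1x_3)$), with free algebra $F(\mathfrak B)$ on $x_1,x_2,\dots$; a T-ideal is a two-sided ideal closed under all algebra endomorphisms. The general linear groups act on $F_d(\mathfrak B)$ by extending the natural linear action on $\mathrm{span}(x_1,\dots,x_d)$ to automorphisms; $W(\lambda)$ is the irreducible polynomial module indexed by the partition $\lambda$. Model: with $K[Y,Z]$ the commutative polynomial ring in $y_1,y_2,\dots,z_1,z_2,\dots$, the algebra $G$ has basis $\{x_i\}\cup\{Y^\alpha Z^\beta:|\alpha|,|\beta|>0\}$ and multiplication $x_ix_j=y_iz_j$, $x_i\cdot(Y^\alpha Z^\beta)=y_iY^\alpha Z^\beta$, $(Y^\alpha Z^\beta)\cdot x_j=Y^\alpha Z^\beta z_j$, $(Y^\alpha Z^\beta)(Y^\gamma Z^\delta)=Y^{\alpha+\gamma}Z^{\beta+\delta}$; it is known that $x_i\mapsto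 x_i$ gives an isomorphism $F(\mathfrak B)\cong G$, so elements of $F(\mathfrak B)^2$ are written as polynomials in the $y_i,z_i$ (positive degree in both sets). For $\mu=(\mu_1,\mu_2)$ with $\mu_2>0$, $w^{(j)}_\mu=y_1^j(y_1z_2-y_2z_1)^{\mu_2}z_1^{\mu_1-\mu_2-j}$, $0\le j\le\mu_1-\mu_2$. *)

(* Model of the free bicommutative algebra F(B) via the
   algebra G of the paper. *)
From HB Require Import structures.
From mathcomp Require Import all_boot all_order all_algebra.
Set Implicit Arguments. Unset Strict Implicit. Unset Printing Implicit Defensive.
Import Order.TTheory GRing.Theory Num.Theory.
Local Open Scope ring_scope.

Inductive bterm (K : Type) : Type :=
| tVar of nat
| tZero
| tAdd of bterm K & bterm K
| tScale of K & bterm K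
| tMul of bterm K & bterm K.
Arguments tVar {K}.
Arguments tZero {K}.

Section Model.
Variable K : fieldType.

(* coefficient of x_j in (the image in G of) t *)
Fixpoint blin (t : bterm K) (j : nat) : K :=
  match t with
  | tVar i => (i == j)%:R
  | tZero => 0
  | tAdd a b => blin a j + blin b j
  | tScale c a => c * blin a j
  | tMul _ _ => 0
  end.

Fixpoint blinv (t : bterm K) (v : nat -> K) : K :=
  match t with
  | tVar i => v i
  | tZero => 0
  | tAdd a b => blinv a v + blinv b v
  | tScale c a => c * blinv a v
  | tMul _ _ => 0
  end.

(* the G^2-part of t, as a polynomial function of y = (y_i), z = (z_i);
   multiplication rule of G: x_i x_j = y_i z_j, x_i M = y_i M, M x_j = M z_j,
   M M' = M M', i.e. (l + P)(l' + P') = (l(y) + P)(l'(z) + P'). *)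
Fixpoint bpoly (t : bterm K) (y z : nat -> K) : K :=
  match t with
  | tVar _ => 0
  | tZero => 0
  | tAdd a b => bpoly a y z + bpoly b y z
  | tScale c a => c * bpoly a y z
  | tMul a b => (blinv a y + bpoly a y z) * (blinv b z + bpoly b y z)
  end.

(* equality in G (= F(B)); K is infinite, so polynomial functions are faithful *)
Definition beq (t s : bterm K) : Prop :=
  (forall j, blin t j = blin s j) /\ (forall y z, bpoly t y z = bpoly s y z).

Fixpoint bsubst (sigma : nat -> bterm K) (t : bterm K) : bterm K :=
  match t with
  | tVar i => sigma i
  | tZero => tZero
  | tAdd a b => tAdd (bsubst sigma a) (bsubst sigma b)
  | tScale c a => tScale c (bsubst sigma a)
  | tMul a b => tMul (bsubst sigma a) (bsubst sigma b)
  end.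

Inductive Tideal (f : bterm K) : bterm K -> Prop :=
| TI_sub sigma : Tideal f (bsubst sigma f)
| TI_zero : Tideal f tZero
| TI_add a b : Tideal f a -> Tideal f b -> Tideal f (tAdd a b)
| TI_scale c a : Tideal f a -> Tideal f (tScale c a)
| TI_mull a b : Tideal f b -> Tideal f (tMul a b)
| TI_mulr a b : Tideal f a -> Tideal f (tMul a b)
| TI_eq a b : Tideal f a -> beq a b -> Tideal f b.

Fixpoint bvars_lt (d : nat) (t : bterm K) : bool :=
  match t with
  | tVar i => (i < d)%N
  | tZero => true
  | tAdd a b => bvars_lt d a && bvars_lt d b
  | tScale _ a => bvars_lt d a
  | tMul a b => bvars_lt d a && bvars_lt d b
  end.

Definition inFd (d : nat) (t : bterm K) : Prop :=
  exists s, bvars_lt d s /\ beq s t.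

Definition glsub (d : nat) (g : 'M[K]_d) (j : nat) : bterm K :=
  match (insub j : option 'I_d) with
  | Some j' => \big[@tAdd K/tZero]_(i < d) tScale (g i j') (tVar i)
  | None => tVar j
  end.

Definition glact (d : nat) (g : 'M[K]_d) (t : bterm K) : bterm K :=
  bsubst (glsub g) t.

Definition GLsubmodule (d : nat) (M : bterm K -> Prop) : Prop :=
  [/\ (forall t s, M t -> beq t s -> M s),
      M tZero,
      (forall a b, M a -> M b -> M (tAdd a b)),
      (forall c a, M a -> M (tScale c a)) &
      (forall t, M t -> inFd d t) /\
      (forall (g : 'M[K]_d) t, g \in unitmx -> M t -> M (glact g t))].

Definition irreducible_GL (d : nat) (M : bterm K -> Prop) : Prop :=
  [/\ GLsubmodule d M,
      (exists t, M t /\ ~ beq t tZero) &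
      (forall N, GLsubmodule d N -> (forall t, N t -> M t) ->
         (forall t, N t -> beq t tZero) \/ (forall t, M t -> N t))].

Definition highest_weight_vector (d : nat) (lam : nat -> nat) (v : bterm K) :=
  [/\ ~ beq v tZero,
      (forall xi : 'rV[K]_d, (forall i, xi ord0 i != 0) ->
         beq (glact (diag_mx xi) v)
             (tScale (\prod_(i < d) xi ord0 i ^+ lam i) v)) &
      (forall g : 'M[K]_d, (forall i j : 'I_d, (j < i)%N -> g i j = 0) ->
         (forall i, g i i = 1) -> beq (glact g v) v)].

Definition part2 (l1 l2 : nat) (i : nat) : nat := nth 0%N [:: l1; l2] i.

Definition iso_W (d : nat) (M : bterm K -> Prop) (l1 l2 : nat) : Prop :=
  [/\ irreducible_GL d M,
      (forall i, (d <= i)%N -> part2 l1 l2 i = 0%N) &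
      exists v, M v /\ highest_weight_vector d (part2 l1 l2) v].

Definition in_Tideal_poly (f : bterm K) (w : (nat -> K) -> (nat -> K) -> K) :=
  exists t, [/\ Tideal f t, (forall i, blin t i = 0) &
                (forall y z, bpoly t y z = w y z)].

(* w^{(j)}_mu, with y_1,y_2,z_1,z_2 indexed 0,1 *)
Definition wmu (m1 m2 j : nat) (y z : nat -> K) : K :=
  y 0%N ^+ j * (y 0%N * z 1%N - y 1%N * z 0%N) ^+ m2 * z 0%N ^+ (m1 - m2 - j).

End Model.

From HB Require Import structures.
From mathcomp Require Import all_boot all_order all_algebra.
From mathcomp Require Import ring zify.
From Stdlib Require Import FunctionalExtensionality Classical.
Set Implicit Arguments. Unset Strict Implicit. Unset Printing Implicit Defensive.
Import GRing.Theory.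
Local Open Scope ring_scope.

(* The T-ideal of f meets the irreducible module M in a nonzero GL-submodule, so it
   contains all of M, in particular a highest weight vector v of weight (l1, l2).
   If v has a linear part, the weights force v = c x_1, and [v, x_2] gives
   c (y_1 z_2 - y_2 z_1).  Otherwise the G^2-part of v restricted to x_1, x_2 is a
   polynomial F(y_1, y_2, z_1, z_2), homogeneous of degree l1 in (y_1, z_1) and of
   degree l2 in (y_2, z_2), and invariant under (y_2, z_2) -> (y_2 + s y_1, z_2 + s z_1).
   Hence x -> F(y_1 + x y_2, y_2, z_1 + x z_2, z_2) has degree at most l1 - l2, and its
   values at x = 0, ..., l1 - l2 are the images of v under x_1 -> x_1 + m x_2.
   Interpolating at the x for which (y_1 + x y_2, z_1 + x z_2) is proportional to a
   fixed (p, q) with F(p, 0, q, 1/p) <> 0, and clearing denominators, writes a nonzero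
   multiple of (y_1 z_2 - y_2 z_1)^l1 as a combination of these images with products
   of linear forms as coefficients, i.e. as an element of the T-ideal.  Multiplying by
   powers of y_1, z_1 and y_1 z_2 - y_2 z_1 gives every w_mu^(j). *)

Section TermEvaluation.
Variable K : fieldType.
Implicit Types (f t s : bterm K) (sigma tau : nat -> bterm K) (y z w : nat -> K).

Definition basis_vec (j : nat) : nat -> K := fun k => (k == j)%:R.

Definition line y y' (r : K) : nat -> K := fun i => y i + r * y' i.

Lemma line0 y y' : line y y' 0 = y.
Proof. by apply: functional_extensionality => i; rewrite /line mul0r addr0. Qed.

Lemma blinvD t w w' : blinv t (fun i => w i + w' i) = blinv t w + blinv t w'.
Proof.
elim: t => //= [|a IHa b IHb|c a IH|_ _ _ _]; rewrite ?addr0 //.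
- by rewrite IHa IHb addrACA.
- by rewrite IH mulrDr.
Qed.

Lemma blinvZ t c w : blinv t (fun i => c * w i) = c * blinv t w.
Proof.
elim: t => //= [|a IHa b IHb|c' a IH|_ _ _ _]; rewrite ?mulr0 //.
- by rewrite IHa IHb mulrDr.
- by rewrite IH mulrCA.
Qed.

Lemma blinv0 t : blinv t (fun _ => 0) = 0.
Proof. by elim: t => //= [a -> b ->|c a ->]; rewrite ?addr0 ?mulr0. Qed.

Lemma blinv_line t y y' r : blinv t (line y y' r) = blinv t y + r * blinv t y'.
Proof. by rewrite /line blinvD blinvZ. Qed.

Lemma blin_blinv t j : blin t j = blinv t (basis_vec j).
Proof. by elim: t => //= [a -> b ->|c a ->]. Qed.

Fixpoint blin_bound t : nat :=
  match t with
  | tVar i => i.+1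
  | tAdd a b => maxn (blin_bound a) (blin_bound b)
  | tScale _ a => blin_bound a
  | _ => 0
  end.

Lemma blinv_sumE t n w : (blin_bound t <= n)%N ->
  blinv t w = \sum_(i < n) blin t i * w i.
Proof.
elim: t => /= [i||a IHa b IHb|c a IH|_ _ _ _] hn.
- rewrite (bigD1 (Ordinal hn)) //= eqxx mul1r big1 ?addr0 // => k.
  by rewrite -(inj_eq val_inj) eq_sym => /negbTE /= ->; rewrite mul0r.
- by rewrite big1 // => i _; rewrite mul0r.
- move: hn; rewrite geq_max => /andP[ha hb].
  by rewrite IHa // IHb // -big_split; apply: eq_bigr => i _; rewrite mulrDl.
- by rewrite IH // mulr_sumr; apply: eq_bigr => i _; rewrite mulrA.
- by rewrite big1 // => i _; rewrite mul0r.
Qed.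

Lemma eq_blinv t s w : (forall j, blin t j = blin s j) -> blinv t w = blinv s w.
Proof.
move=> eq_ts; set n := maxn (blin_bound t) (blin_bound s).
rewrite (@blinv_sumE t n) ?leq_maxl // (@blinv_sumE s n) ?leq_maxr //.
by apply: eq_bigr => i _; rewrite eq_ts.
Qed.

Lemma blinv_eq0 t w : (forall j, blin t j = 0) -> blinv t w = 0.
Proof.
move=> t0; rewrite (@blinv_sumE t (blin_bound t)) // big1 // => i _.
by rewrite t0 mul0r.
Qed.

Lemma blinv_subst sigma t w :
  blinv (bsubst sigma t) w = blinv t (fun i => blinv (sigma i) w).
Proof. by elim: t => //= [a -> b ->|c a ->]. Qed.

Lemma bpoly_subst sigma t y z :
  bpoly (bsubst sigma t) y z =
  bpoly t (fun i => blinv (sigma i) y + bpoly (sigma i) y z)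
          (fun i => blinv (sigma i) z + bpoly (sigma i) y z)
  + blinv t (fun i => bpoly (sigma i) y z).
Proof.
elim: t => /= [i||a IHa b IHb|c a IH|a IHa b IHb].
- by rewrite add0r.
- by rewrite addr0.
- by rewrite IHa IHb addrACA.
- by rewrite IH mulrDr.
- by rewrite !blinv_subst IHa IHb !blinvD addr0; ring.
Qed.

Lemma bpoly_subst_lin sigma t y z : (forall i y z, bpoly (sigma i) y z = 0) ->
  bpoly (bsubst sigma t) y z =
  bpoly t (fun i => blinv (sigma i) y) (fun i => blinv (sigma i) z).
Proof.
move=> sigma_lin; rewrite bpoly_subst.
have -> : (fun i => bpoly (sigma i) y z) = (fun _ => 0).
  by apply: functional_extensionality => i; rewrite sigma_lin.
by rewrite blinv0 addr0; congr bpoly; apply: functional_extensionality => i;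
  rewrite sigma_lin addr0.
Qed.

Lemma beq_subst sigma t s : beq t s -> beq (bsubst sigma t) (bsubst sigma s).
Proof.
case=> eq_lin eq_poly; split=> [j|y z].
- by rewrite !blin_blinv !blinv_subst; apply: eq_blinv.
- by rewrite !bpoly_subst eq_poly (eq_blinv _ eq_lin).
Qed.

Lemma bsubst_comp sigma tau t :
  bsubst sigma (bsubst tau t) = bsubst (fun i => bsubst sigma (tau i)) t.
Proof. by elim: t => //= [a -> b ->|c a ->|a -> b ->]. Qed.

Lemma bsubst_id t : bsubst (@tVar K) t = t.
Proof. by elim: t => //= [a -> b ->|c a ->|a -> b ->]. Qed.

Lemma Tideal_subst f sigma t : Tideal f t -> Tideal f (bsubst sigma t).
Proof.
elim=> /= {t} [tau||a b _ ha _ hb|c a _ ha|a b _ hb|a b _ ha|a b _ ha hab].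
- by rewrite bsubst_comp; apply: TI_sub.
- exact: TI_zero.
- exact: TI_add.
- exact: TI_scale.
- exact: TI_mull.
- exact: TI_mulr.
- exact: TI_eq ha (beq_subst _ hab).
Qed.

Lemma Tideal_self f : Tideal f f.
Proof. by have := TI_sub f (@tVar K); rewrite bsubst_id. Qed.

Lemma bvars_lt_blin d s j : bvars_lt d s -> (d <= j)%N -> blin s j = 0.
Proof.
move=> + le_dj; elim: s => /= [i lt_id||a IHa b IHb /andP[ha hb]|c a IH ha|] //.
- by rewrite ltn_eqF // (leq_trans lt_id le_dj).
- by rewrite IHa // IHb // addr0.
- by rewrite IH // mulr0.
Qed.

Lemma bvars_lt_blinv d s w w' : bvars_lt d s -> (forall i, (i < d)%N -> w i = w' i) ->
  blinv s w = blinv s w'.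
Proof.
move=> + eq_w; elim: s => /= [i /eq_w||a IHa b IHb /andP[ha hb]|c a IH ha|] //.
- by rewrite IHa // IHb.
- by rewrite IH.
Qed.

Lemma bvars_lt_bpoly d s y y' z z' : bvars_lt d s -> (forall i, (i < d)%N -> y i = y' i) ->
  (forall i, (i < d)%N -> z i = z' i) -> bpoly s y z = bpoly s y' z'.
Proof.
move=> + eq_y eq_z; elim: s => /= [||a IHa b IHb /andP[ha hb]|c a IH ha|
  a IHa b IHb /andP[ha hb]] //.
- by rewrite IHa // IHb.
- by rewrite IH.
- by rewrite IHa // IHb // (bvars_lt_blinv ha eq_y) (bvars_lt_blinv hb eq_z).
Qed.

Lemma bpoly_on_line t y y' z z' : exists p : {poly K}, forall r,
  bpoly t (line y y' r) (line z z' r) = p.[r].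
Proof.
elim: t => /= [i||a [pa ha] b [pb hb]|c a [pa ha]|a [pa ha] b [pb hb]].
- by exists 0 => r; rewrite horner0.
- by exists 0 => r; rewrite horner0.
- by exists (pa + pb) => r; rewrite ha hb hornerD.
- by exists (c *: pa) => r; rewrite ha hornerZ.
- exists (((blinv a y)%:P + blinv a y' *: 'X + pa) *
          ((blinv b z)%:P + blinv b z' *: 'X + pb)) => r.
  by rewrite !blinv_line ha hb !hornerE; ring.
Qed.

(* G^2 has no component of degree < 2 *)
Lemma bpoly_dilate t y z : exists p : {poly K}, forall r,
  bpoly t (fun i => r * y i) (fun i => r * z i) = r ^+ 2 * p.[r].
Proof.
elim: t => /= [i||a [pa ha] b [pb hb]|c a [pa ha]|a [pa ha] b [pb hb]].
- by exists 0 => r; rewrite horner0 mulr0.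
- by exists 0 => r; rewrite horner0 mulr0.
- by exists (pa + pb) => r; rewrite ha hb hornerD mulrDr.
- by exists (c *: pa) => r; rewrite ha hornerZ mulrCA.
- exists (((blinv a y)%:P + 'X * pa) * ((blinv b z)%:P + 'X * pb)) => r.
  by rewrite !blinvZ ha hb !(hornerM, hornerD, hornerX, hornerC); ring.
Qed.

End TermEvaluation.

Section LinearAction.
Variables (K : fieldType) (d : nat).
Implicit Types (t : bterm K) (g : 'M[K]_d) (w y z : nat -> K).

Definition glvec g w : nat -> K := fun j =>
  match (insub j : option 'I_d) with
  | Some j' => \sum_(i < d) g i j' * w i
  | None => w j
  end.

Lemma glsub_blinv g j w : blinv (glsub g j) w = glvec g w j.
Proof.
rewrite /glsub /glvec; case: insub => [j'|] //=.
by rewrite (big_morph (fun t => blinv t w) (id1 := 0) (op1 := +%R)).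
Qed.

Lemma glsub_bpoly g j y z : bpoly (glsub g j) y z = 0.
Proof.
rewrite /glsub; case: insub => [j'|] //=.
rewrite (big_morph (fun t => bpoly t y z) (id1 := 0) (op1 := +%R)) //.
by rewrite big1 // => i _ /=; rewrite mulr0.
Qed.

Lemma glact_bpoly g t y z : bpoly (glact g t) y z = bpoly t (glvec g y) (glvec g z).
Proof.
rewrite /glact bpoly_subst_lin; last by move=> *; apply: glsub_bpoly.
by congr bpoly; apply: functional_extensionality => i; rewrite glsub_blinv.
Qed.

Lemma glact_blin g t j : blin (glact g t) j = blinv t (glvec g (basis_vec K j)).
Proof.
rewrite blin_blinv /glact blinv_subst; congr blinv.
by apply: functional_extensionality => i; rewrite glsub_blinv.
Qed.

Definition scale_coords (P : pred nat) (r : K) w : nat -> K :=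
  fun j => if P j then r * w j else w j.

Definition scale_mx (P : pred nat) (r : K) : 'rV[K]_d :=
  \row_(i < d) if P i then r else 1.

Lemma glvec_scale (P : pred nat) (r : K) w : (forall j, P j -> (j < d)%N) ->
  glvec (diag_mx (scale_mx P r)) w = scale_coords P r w.
Proof.
move=> Pd; apply: functional_extensionality => j; rewrite /glvec /scale_coords.
case: insubP => [j' _ <-|]; last by case: (boolP (P j)) => // /Pd ->.
rewrite (bigD1 j') //= big1 ?addr0 => [|i /negbTE neq_ij]; last first.
  by rewrite mxE neq_ij mulr0n mul0r.
by rewrite !mxE eqxx mulr1n; case: ifP; rewrite ?mul1r.
Qed.

Lemma scale_mx_neq0 (P : pred nat) (r : K) i : r != 0 -> scale_mx P r ord0 i != 0.
Proof. by move=> r_neq0; rewrite mxE; case: ifP; rewrite ?oner_eq0. Qed.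

Lemma prod_scale_mx (P : pred nat) (r : K) (lam : nat -> nat) :
  \prod_(i < d) scale_mx P r ord0 i ^+ lam i = r ^+ (\sum_(i < d | P i) lam i).
Proof.
rewrite (bigID (fun i : 'I_d => P i)) /= -prodrXr [X in _ * X]big1 ?mulr1.
  by apply: eq_bigr => i Pi; rewrite mxE Pi.
by move=> i /negbTE nPi; rewrite mxE nPi expr1n.
Qed.

Definition shear_coords (s : K) w : nat -> K :=
  fun j => if j == 1%N then w 1%N + s * w 0%N else w j.

Definition shear_mx (s : K) : 'M[K]_d :=
  \matrix_(i, j) ((i == j)%:R + ((i == 0%N :> nat) && (j == 1%N :> nat))%:R * s).

Lemma shear_mx_unitriangular (s : K) :
  (forall i j : 'I_d, (j < i)%N -> shear_mx s i j = 0) /\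
  (forall i, shear_mx s i i = 1).
Proof.
split=> [i j lt_ji|i]; rewrite mxE.
  have /negbTE -> : i != j by rewrite -(inj_eq val_inj) /= gtn_eqF.
  by rewrite (gtn_eqF (leq_ltn_trans (leq0n j) lt_ji)) mul0r addr0.
have -> : (i == 0%N :> nat) && (i == 1%N :> nat) = false by case: (nat_of_ord i) => [|[]].
by rewrite eqxx mul0r addr0.
Qed.

Lemma glvec_shear (s : K) w : (1 < d)%N -> glvec (shear_mx s) w = shear_coords s w.
Proof.
move=> lt1d; apply: functional_extensionality => j; rewrite /glvec /shear_coords.
case: insubP => [j' _ <-|]; last by case: eqP => // ->; rewrite lt1d.
under eq_bigr do rewrite mxE mulrDl.
rewrite big_split /= (bigD1 j') //= eqxx mul1r big1 ?add0r => [|i /negbTE ->]; last first.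
  by rewrite mul0r.
case: eqP => [-> | _]; last by rewrite big1 ?addr0 // => i _; rewrite andbF !mul0r.
rewrite (bigD1 (Ordinal (ltnW lt1d))) //= big1 ?addr0 => [|i ne_i0].
  by rewrite mul1r.
have /negbTE -> : nat_of_ord i != 0%N by rewrite -(inj_eq val_inj) in ne_i0.
by rewrite !mul0r.
Qed.

End LinearAction.

Section CharZero.
Variable K : fieldType.
Hypothesis K0 : [pchar K] =i pred0.
Implicit Types p q : {poly K}.

Lemma natf_eq0 n : (n%:R == 0 :> K) = (n == 0%N).
Proof. exact: (pcharf0P K).1 K0 n. Qed.

Lemma natf_inj : injective (fun n : nat => n%:R : K).
Proof.
have le_eq a b : (a <= b)%N -> (a%:R : K) = b%:R -> b = a.
  move=> le_ab eq_ab; apply/eqP; rewrite eqn_leq le_ab andbT -subn_eq0.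
  by rewrite -natf_eq0 natrB // eq_ab subrr.
by move=> m n /= eq_mn; case/orP: (leq_total m n) => /le_eq ->.
Qed.

Lemma expr2n_inj m n : (2 : K) ^+ m = 2 ^+ n -> m = n.
Proof. by rewrite -!natrX => /natf_inj; apply: expnI. Qed.

Lemma poly_eq0_on_nonzero p : (forall r, r != 0 -> p.[r] = 0) -> p = 0.
Proof.
move=> p0; apply/eqP/negPn/negP => p_neq0.
set rs := [seq i.+1%:R : K | i <- iota 0 (size p)].
have roots_rs : all (root p) rs.
  by apply/allP => _ /mapP[i _ ->]; apply/eqP/p0; rewrite natf_eq0.
have uniq_rs : uniq rs by rewrite map_inj_uniq ?iota_uniq // => i j /natf_inj [].
by have := max_poly_roots p_neq0 roots_rs uniq_rs; rewrite size_map size_iota ltnn.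
Qed.

Lemma eq_poly_on_nonzero p q : (forall r, r != 0 -> p.[r] = q.[r]) -> p = q.
Proof.
move=> eq_pq; apply/eqP; rewrite -subr_eq0; apply/eqP/poly_eq0_on_nonzero => r r0.
by rewrite hornerD hornerN eq_pq // subrr.
Qed.

Lemma exists_nonroot p (c : K) : p != 0 -> exists r, r != c /\ p.[r] != 0.
Proof.
move=> p_neq0; apply: NNPP => no_r.
have : p * ('X - c%:P) == 0.
  apply/eqP/poly_eq0_on_nonzero => r _; apply/eqP; rewrite hornerM hornerXsubC.
  rewrite mulf_eq0 subr_eq0 orbC; apply/negPn/negP => /norP[r_neq_c pr_neq0].
  by apply: no_r; exists r.
by rewrite mulf_eq0 polyXsubC_eq0 orbF (negbTE p_neq0).
Qed.

Lemma lagrange_homog n (x : nat -> K) p (N D : K) :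
  (0 < n)%N -> injective x -> (size p <= n)%N -> D != 0 ->
  D ^+ n.-1 * p.[N / D] =
  \sum_(i < n) p.[x i] * (\prod_(j < n | j != i) (x i - x j))^-1 *
               \prod_(j < n | j != i) (N - x j * D).
Proof.
move=> n_gt0 x_inj size_p D_neq0.
rewrite {1}(lagrange_gen n_gt0 x_inj size_p) horner_sum mulr_sumr.
apply: eq_bigr => i _; rewrite lagrangeE //= !(hornerM, hornerC) !horner_prod.
rewrite !(eq_bigr _ (fun j _ => hornerXsubC _ _)).
have -> : \prod_(j < n | j != i) (N - x j * D) =
          D ^+ n.-1 * \prod_(j < n | j != i) (N / D - x j).
  have card_neq_i : #|predC1 i| = n.-1 by rewrite cardC1 card_ord.
  rewrite -card_neq_i -prodrMl.
  by apply: eq_bigr => j _; rewrite mulrBr mulrCA divff // mulr1 mulrC.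
by ring.
Qed.

Lemma bpoly_line_at0 (t : bterm K) y y' z z' (g : {poly K}) :
  (forall r, r != 0 -> bpoly t (line y y' r) (line z z' r) = g.[r]) ->
  bpoly t y z = g.[0].
Proof.
move=> eq_g; have [p p_line] := bpoly_on_line t y y' z z'.
have eq_pg : p = g by apply: eq_poly_on_nonzero => r r0; rewrite -p_line eq_g.
by have := p_line 0; rewrite !line0 eq_pg.
Qed.

Lemma bpoly_eq0_of_homog (t : bterm K) k : (k <= 1)%N ->
  (forall r y z, r != 0 ->
     bpoly t (fun i => r * y i) (fun i => r * z i) = r ^+ k * bpoly t y z) ->
  forall y z, bpoly t y z = 0.
Proof.
move=> le_k1 t_homog y z; have [p p_E] := bpoly_dilate t y z.
have /(congr1 (horner^~ 0)) : (bpoly t y z)%:P = 'X^(2 - k) * p.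
  apply: eq_poly_on_nonzero => r r0; apply: (mulfI (expf_neq0 k r0)).
  by rewrite hornerC hornerM hornerXn mulrA -exprD subnKC ?(leq_trans le_k1) // -p_E t_homog.
by rewrite hornerC hornerM hornerXn expr0n subn_eq0 leqNgt (leq_ltn_trans le_k1) // mul0r.
Qed.

Lemma two_neq0 : (2 : K) != 0.
Proof. by rewrite natf_eq0. Qed.

Lemma size_poly_reciprocal (G Q : {poly K}) n (c : K) :
  (forall x, x != 0 -> G.[x] = c * x ^+ n * Q.[x^-1]) -> (size G <= n.+1)%N.
Proof.
move=> GQ; set N := size Q; set R := \poly_(i < N.+1) Q`_(N - i).
have R_E x : x != 0 -> R.[x] = x ^+ N * Q.[x^-1].
  move=> x0; rewrite horner_poly (@horner_coef_wide _ N.+1) // mulr_sumr.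
  rewrite [RHS](reindex_inj rev_ord_inj); apply: eq_bigr => i _ /=.
  rewrite subSS exprVn mulrCA; congr (_ * _).
  have le_iN : (i <= N)%N by rewrite -ltnS.
  by rewrite -{2}(subnKC le_iN) exprD mulfK // expf_neq0.
have GR : 'X^N * G = c *: ('X^n * R).
  apply: eq_poly_on_nonzero => // x x0.
  by rewrite hornerZ !hornerM !hornerXn GQ // R_E //; ring.
have [->|G0] := eqVneq G 0; first by rewrite size_poly0.
have := size_scale_leq c ('X^n * R); rewrite -GR mulrC size_mulXn //.
have := size_polyMleq 'X^n R; rewrite size_polyXn.
have := size_poly N.+1 (fun i => Q`_(N - i)); rewrite -/R.
lia.
Qed.

End CharZero.

Section ShearInvariantForm.
Variables (K : fieldType) (F : K -> K -> K -> K -> K) (l1 l2 : nat).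
Hypothesis K0 : [pchar K] =i pred0.
Hypothesis le_l2l1 : (l2 <= l1)%N.
Hypothesis F_homog1 : forall r a b c e, r != 0 ->
  F (r * a) b (r * c) e = r ^+ l1 * F a b c e.
Hypothesis F_homog2 : forall r a b c e, r != 0 ->
  F a (r * b) c (r * e) = r ^+ l2 * F a b c e.
Hypothesis F_shear : forall s a b c e, F a (b + s * a) c (e + s * c) = F a b c e.
Hypothesis F_line : forall a b c e a' b' c' e', exists p : {poly K}, forall x,
  F (a + x * a') (b + x * b') (c + x * c') (e + x * e') = p.[x].

Lemma F_origin b e : (0 < l1)%N -> F 0 b 0 e = 0.
Proof.
move=> l1_gt0; have := F_homog1 0 b 0 e (two_neq0 K0); rewrite !mulr0 => F0_2.
have /eqP : (1 - 2 ^+ l1) * F 0 b 0 e = 0 by rewrite mulrBl mul1r -F0_2 subrr.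
rewrite mulf_eq0 subr_eq0 => /orP[/eqP two_l1|/eqP //].
by move: l1_gt0; rewrite -(@expr2n_inj _ K0 0 l1) ?expr0.
Qed.

Lemma F_shift_reciprocal a b c e x : x != 0 ->
  F (a + x * b) b (c + x * e) e =
  (-1) ^+ l2 * x ^+ (l1 - l2) * F (b + x^-1 * a) a (e + x^-1 * c) c.
Proof.
move=> x0; rewrite -(F_shear (- x^-1)).
have -> : b + - x^-1 * (a + x * b) = - x^-1 * a by field.
have -> : e + - x^-1 * (c + x * e) = - x^-1 * c by field.
rewrite F_homog2 ?oppr_eq0 ?invr_eq0 //.
have -> : a + x * b = x * (b + x^-1 * a) by field.
have -> : c + x * e = x * (e + x^-1 * c) by field.
rewrite F_homog1 //.
have -> : x ^+ l1 = x ^+ (l1 - l2) * x ^+ l2 by rewrite -exprD subnK.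
rewrite (exprNn x^-1) exprVn.
by field; rewrite expf_neq0.
Qed.

Lemma size_F_shift a b c e : exists G : {poly K},
  (size G <= (l1 - l2).+1)%N /\ forall x, G.[x] = F (a + x * b) b (c + x * e) e.
Proof.
have [G G_E] := F_line a b c e b 0 e 0.
have [Q Q_E] := F_line b a e c a 0 c 0.
exists G; split=> [|x]; last by rewrite -G_E !mulr0 !addr0.
apply: (size_poly_reciprocal K0 (Q := Q) (c := (-1) ^+ l2)) => x x0.
by rewrite -G_E -Q_E !mulr0 !addr0 F_shift_reciprocal.
Qed.

(* for x = (c p - a q) / (b q - e p) the point (a + x b, c + x e) is proportional to (p, q) *)
Lemma F_shift_eval p q a b c e : (0 < l1)%N -> p != 0 -> b * q - e * p != 0 ->
  (b * q - e * p) ^+ (l1 - l2) *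
    F (a + (c * p - a * q) / (b * q - e * p) * b) b
      (c + (c * p - a * q) / (b * q - e * p) * e) e =
  (-1) ^+ (l1 + l2) * F p 0 q p^-1 * (a * e - b * c) ^+ l1.
Proof.
set D := b * q - e * p; set Dl := a * e - b * c => l1_gt0 p0 D0.
have -> : a + (c * p - a * q) / D * b = (- Dl / D) * p.
  by rewrite /Dl /D; field; exact: D0.
have -> : c + (c * p - a * q) / D * e = (- Dl / D) * q.
  by rewrite /Dl /D; field; exact: D0.
have [->|Dl0] := eqVneq Dl 0.
  by rewrite oppr0 !mul0r F_origin // expr0n gtn_eqF // !mulr0.
rewrite F_homog1 ?mulf_neq0 ?oppr_eq0 ?invr_eq0 //.
have -> : F p b q e = F p ((- D) * 0) q ((- D) * p^-1).
  by rewrite -[RHS](F_shear (b / p)) /D; congr F; field; exact: p0.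
rewrite (@F_homog2 (- D)) ?oppr_eq0 //; set n := (l1 - l2)%N.
have -> : l1 = (n + l2)%N by rewrite subnK.
rewrite exprMn (exprNn Dl) (exprNn D) exprVn !exprD.
by field; rewrite !expf_neq0.
Qed.

Lemma F_interpolation p q a b c e : (0 < l1)%N -> p != 0 -> b * q - e * p != 0 ->
  \sum_(m < (l1 - l2).+1) F (a + m%:R * b) b (c + m%:R * e) e *
     (\prod_(j < (l1 - l2).+1 | j != m) (m%:R - j%:R))^-1 *
     \prod_(j < (l1 - l2).+1 | j != m) ((c * p - a * q) - j%:R * (b * q - e * p))
  = (-1) ^+ (l1 + l2) * F p 0 q p^-1 * (a * e - b * c) ^+ l1.
Proof.
move=> l1_gt0 p0 D0; have [G [size_G G_E]] := size_F_shift a b c e.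
rewrite -F_shift_eval // -G_E.
rewrite [RHS](lagrange_homog (x := fun i => i%:R) _ (ltn0Sn _) (natf_inj K0) size_G D0).
by apply: eq_bigr => m _; rewrite G_E.
Qed.

Lemma F_translate_neq0 a b c e a' b' c' e' (u : K) : F a b c e != 0 ->
  exists r, r != u /\ F (a + r * a') (b + r * b') (c + r * c') (e + r * e') != 0.
Proof.
move=> Fabce; have [P P_E] := F_line a b c e a' b' c' e'.
have P_neq0 : P != 0.
  by apply: contraNneq Fabce => P0; have := P_E 0; rewrite !mul0r !addr0 P0 horner0 => ->.
by have [r [ne_ru Pr]] := exists_nonroot K0 u P_neq0; exists r; rewrite P_E.
Qed.

Lemma exists_F_normal_neq0 a b c e : F a b c e != 0 ->
  exists p q, p != 0 /\ F p 0 q p^-1 != 0.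
Proof.
case/(F_translate_neq0 1 0 0 0 (- a)) => r [ne_r]; rewrite !mulr0 !addr0 mulr1.
set p := a + r; have p0 : p != 0 by rewrite /p addrC addr_eq0.
have -> : F p b c e = F p 0 c (e - b * c / p).
  by rewrite -[LHS](F_shear (- (b / p))); congr F; field.
case/(F_translate_neq0 0 0 0 1 (- (e - b * c / p))) => s [ne_s].
rewrite !mulr0 !addr0 mulr1; set w := e - b * c / p + s => Fw.
have w0 : w != 0 by rewrite /w addrC addr_eq0.
exists p, c; split=> //; apply: contraNneq Fw => F0.
have -> : F p 0 c w = F p ((p * w) * 0) c ((p * w) * p^-1).
  by congr F; [rewrite mulr0 | field].
by rewrite (@F_homog2 (p * w)) ?mulf_neq0 // F0 mulr0.
Qed.

End ShearInvariantForm.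

Section TidealPolynomials.
Variables (K : fieldType) (f : bterm K).
Local Notation I := (in_Tideal_poly f).
Implicit Types (Q R L : (nat -> K) -> (nat -> K) -> K).

Lemma in_Tideal_poly_ext Q R : (forall y z, Q y z = R y z) -> I Q -> I R.
Proof. by move=> eq_QR [t [Tt t_lin t_poly]]; exists t; split=> // y z; rewrite t_poly. Qed.

Lemma in_Tideal_poly_bpoly t : Tideal f t -> (forall j, blin t j = 0) -> I (bpoly t).
Proof. by exists t. Qed.

Lemma in_Tideal_poly0 : I (fun _ _ => 0).
Proof. by exists tZero; split=> //; apply: TI_zero. Qed.

Lemma in_Tideal_polyD Q R : I Q -> I R -> I (fun y z => Q y z + R y z).
Proof.
move=> [t [Tt t_lin t_poly]] [s [Ts s_lin s_poly]].
exists (tAdd t s); split=> /= [|i|y z]; first exact: TI_add.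
  by rewrite t_lin s_lin addr0.
by rewrite t_poly s_poly.
Qed.

Lemma in_Tideal_polyZ c Q : I Q -> I (fun y z => c * Q y z).
Proof.
move=> [t [Tt t_lin t_poly]]; exists (tScale c t); split=> /= [|i|y z].
- exact: TI_scale.
- by rewrite t_lin mulr0.
- by rewrite t_poly.
Qed.

Lemma in_Tideal_polyMy k Q : I Q -> I (fun y z => y k * Q y z).
Proof.
move=> [t [Tt t_lin t_poly]]; exists (tMul (tVar k) t); split=> //= [|y z].
  exact: TI_mull.
by rewrite t_poly (blinv_eq0 _ t_lin) !add0r addr0.
Qed.

Lemma in_Tideal_polyMz k Q : I Q -> I (fun y z => z k * Q y z).
Proof.
move=> [t [Tt t_lin t_poly]]; exists (tMul t (tVar k)); split=> //= [|y z].
  exact: TI_mulr.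
by rewrite t_poly (blinv_eq0 _ t_lin) !add0r addr0 mulrC.
Qed.

Definition Tideal_multiplier L := forall Q, I Q -> I (fun y z => L y z * Q y z).

Definition linear_form2 L := exists A B C E, forall y z,
  L y z = A * y 0%N + B * y 1%N + C * z 0%N + E * z 1%N.

Lemma linear_form2_multiplier L : linear_form2 L -> Tideal_multiplier L.
Proof.
move=> [A [B [C [E L_E]]]] Q IQ.
apply: (in_Tideal_poly_ext (Q := fun y z => A * (y 0%N * Q y z) + B * (y 1%N * Q y z) +
          C * (z 0%N * Q y z) + E * (z 1%N * Q y z))).
  by move=> y z; rewrite L_E; ring.
by do 3?apply: in_Tideal_polyD; apply: in_Tideal_polyZ;
  (apply: in_Tideal_polyMy || apply: in_Tideal_polyMz).
Qed.

Definition det2 (y z : nat -> K) : K := y 0%N * z 1%N - y 1%N * z 0%N.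

Lemma det2_multiplier : Tideal_multiplier det2.
Proof.
move=> Q IQ; have := in_Tideal_polyD (in_Tideal_polyMy 0 (in_Tideal_polyMz 1 IQ))
  (in_Tideal_polyZ (-1) (in_Tideal_polyMy 1 (in_Tideal_polyMz 0 IQ))).
by apply: in_Tideal_poly_ext => y z; rewrite /det2; ring.
Qed.

Lemma multiplier_exp L n : Tideal_multiplier L ->
  Tideal_multiplier (fun y z => L y z ^+ n).
Proof.
move=> ML Q IQ; elim: n => [|n IHn].
  by apply: in_Tideal_poly_ext IQ => y z; rewrite expr0 mul1r.
by apply: in_Tideal_poly_ext (ML _ IHn) => y z; rewrite exprS mulrA.
Qed.

Lemma multiplier_prod (J : Type) (r : seq J) (P : pred J) (L : J -> _) :
  (forall j, Tideal_multiplier (L j)) ->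
  Tideal_multiplier (fun y z => \prod_(j <- r | P j) L j y z).
Proof.
move=> ML Q IQ; elim: r => [|j r IHr].
  by apply: in_Tideal_poly_ext IQ => y z; rewrite big_nil mul1r.
rewrite /=; case Pj: (P j).
  by apply: in_Tideal_poly_ext (ML j _ IHr) => y z; rewrite big_cons Pj mulrA.
by apply: in_Tideal_poly_ext IHr => y z; rewrite big_cons Pj.
Qed.

Lemma in_Tideal_poly_sum (J : Type) (r : seq J) (R : J -> _) :
  (forall j, I (R j)) -> I (fun y z => \sum_(j <- r) R j y z).
Proof.
move=> IR; elim: r => [|j r IHr].
  by apply: in_Tideal_poly_ext in_Tideal_poly0 => y z; rewrite big_nil.
by apply: in_Tideal_poly_ext (in_Tideal_polyD (IR j) IHr) => y z; rewrite big_cons.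
Qed.

End TidealPolynomials.

Section HighestWeightVector.
Variables (K : fieldType) (d : nat) (v : bterm K) (l1 l2 : nat).
Hypothesis K0 : [pchar K] =i pred0.
Local Notation lam := (part2 l1 l2).
Hypothesis lam_out : forall i, (d <= i)%N -> lam i = 0%N.
Hypothesis v_hw : highest_weight_vector d lam v.
Hypothesis v_Fd : inFd d v.
Hypothesis le_l2l1 : (l2 <= l1)%N.
Implicit Types (y z w : nat -> K).

Lemma bpoly_v_local y y' z z' : (forall i, (i < d)%N -> y i = y' i) ->
  (forall i, (i < d)%N -> z i = z' i) -> bpoly v y z = bpoly v y' z'.
Proof. by case: v_Fd => s [s_lt [_ s_v]]; rewrite -!s_v; apply: bvars_lt_bpoly. Qed.

Lemma blin_v_out j : (d <= j)%N -> blin v j = 0.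
Proof. by case: v_Fd => s [s_lt [s_v _]]; rewrite -s_v; apply: bvars_lt_blin. Qed.

Lemma dim_gt0 : (0 < d)%N.
Proof.
rewrite lt0n; apply/eqP => d0; case: v_hw => v_neq0 _ _; apply: v_neq0.
split=> [j|y z]; first by rewrite blin_v_out ?d0.
have [p p_E] := bpoly_dilate v y z.
by rewrite /= (@bpoly_v_local _ (fun i => 0 * y i) _ (fun i => 0 * z i)) ?d0 // p_E expr0n mul0r.
Qed.

Lemma bpoly_v_scale (P : pred nat) r y z : r != 0 -> (forall j, P j -> (j < d)%N) ->
  bpoly v (scale_coords P r y) (scale_coords P r z) =
  r ^+ (\sum_(i < d | P i) lam i) * bpoly v y z.
Proof.
move=> r0 Pd; case: v_hw => _ /(_ (scale_mx d P r)) v_torus _.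
have [_ /(_ y z)] := v_torus (fun i => scale_mx_neq0 P i r0).
by rewrite glact_bpoly !glvec_scale // prod_scale_mx.
Qed.

Lemma blin_v_scale (P : pred nat) r j : r != 0 -> (forall k, P k -> (k < d)%N) ->
  (if P j then r else 1) * blin v j = r ^+ (\sum_(i < d | P i) lam i) * blin v j.
Proof.
move=> r0 Pd; case: v_hw => _ /(_ (scale_mx d P r)) v_torus _.
have [/(_ j) + _] := v_torus (fun i => scale_mx_neq0 P i r0).
rewrite glact_blin glvec_scale // prod_scale_mx /= => <-.
rewrite blin_blinv -blinvZ; congr blinv; apply: functional_extensionality => k.
rewrite /scale_coords /basis_vec; case: (eqVneq k j) => [->|_] /=.
  by case: (P j); rewrite mulr1.
by case: (P j); case: (P k); rewrite !mulr0.
Qed.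

Lemma bpoly_v_shear s y z : (1 < d)%N ->
  bpoly v (shear_coords s y) (shear_coords s z) = bpoly v y z.
Proof.
move=> lt1d; case: v_hw => _ _ /(_ (shear_mx d s)) v_unip.
have [lower diag] := shear_mx_unitriangular d s.
by have [_ /(_ y z)] := v_unip lower diag; rewrite glact_bpoly !glvec_shear.
Qed.

Lemma sum_ord_pred1 (G : nat -> nat) k : (k < d)%N ->
  (\sum_(i < d | i == k :> nat) G i)%N = G k.
Proof. by move=> lt_kd; rewrite (big_pred1 (Ordinal lt_kd)). Qed.

Definition pair2 (a b : K) : nat -> K :=
  fun i => if i == 0%N then a else if i == 1%N then b else 0.

Definition hwF (a b c e : K) : K := bpoly v (pair2 a b) (pair2 c e).

Lemma hwF_local a b c e a' b' c' e' : (d <= 1)%N -> a = a' -> c = c' ->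
  hwF a b c e = hwF a' b' c' e'.
Proof.
move=> le_d1 -> ->.
by apply: bpoly_v_local => i lt_id; have -> : i = 0%N by lia.
Qed.

Lemma hwF_homog1 r a b c e : r != 0 -> hwF (r * a) b (r * c) e = r ^+ l1 * hwF a b c e.
Proof.
move=> r0; have scale0 a' b' : scale_coords (pred1 0%N) r (pair2 a' b') = pair2 (r * a') b'.
  by apply: functional_extensionality => -[|[|i]]; rewrite /scale_coords /pair2 ?mulr0.
have lt0d := dim_gt0.
by rewrite /hwF -!scale0 bpoly_v_scale ?sum_ord_pred1 // => j /eqP ->.
Qed.

Lemma hwF_homog2 r a b c e : r != 0 -> hwF a (r * b) c (r * e) = r ^+ l2 * hwF a b c e.
Proof.
move=> r0; have [lt1d|le_d1] := ltnP 1 d; last first.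
  by rewrite -[l2]/(lam 1) lam_out // expr0 mul1r; apply: hwF_local.
have scale1 a' b' : scale_coords (pred1 1%N) r (pair2 a' b') = pair2 a' (r * b').
  by apply: functional_extensionality => -[|[|i]]; rewrite /scale_coords /pair2 ?mulr0.
by rewrite /hwF -!scale1 bpoly_v_scale // ?sum_ord_pred1 // => j /eqP ->.
Qed.

Lemma hwF_shear s a b c e : hwF a (b + s * a) c (e + s * c) = hwF a b c e.
Proof.
have [lt1d|le_d1] := ltnP 1 d; last exact: hwF_local.
have shear a' b' : shear_coords s (pair2 a' b') = pair2 a' (b' + s * a').
  by apply: functional_extensionality => -[|[|i]].
by rewrite /hwF -!shear bpoly_v_shear.
Qed.

Lemma hwF_line a b c e a' b' c' e' : exists p : {poly K}, forall x,
  hwF (a + x * a') (b + x * b') (c + x * c') (e + x * e') = p.[x].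
Proof.
have [p p_E] := bpoly_on_line v (pair2 a b) (pair2 a' b') (pair2 c e) (pair2 c' e').
have line2 a1 b1 a2 b2 x : line (pair2 a1 b1) (pair2 a2 b2) x = pair2 (a1 + x * a2) (b1 + x * b2).
  by apply: functional_extensionality => -[|[|i]]; rewrite /line /pair2 ?mulr0 ?addr0.
by exists p => x; rewrite /hwF -!line2.
Qed.

(* v has weight 0 in the variables x_3, ..., x_d, so only y_1, y_2, z_1, z_2 matter *)
Lemma bpoly_v_pair2 y z : bpoly v y z = hwF (y 0%N) (y 1%N) (z 0%N) (z 1%N).
Proof.
pose P : pred nat := fun j => (1 < j < d)%N.
pose low w j := if P j then 0 else w j.
pose high w j := if P j then w j else 0.
have lineE w r : line (low w) (high w) r = scale_coords P r w.
  apply: functional_extensionality => j; rewrite /line /low /high /scale_coords.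
  by case: (P j); rewrite ?add0r ?mulr0 ?addr0.
have weight0 : (\sum_(i < d | P i) lam i = 0)%N.
  by rewrite big1 // => i /andP[lt1i _]; rewrite /part2 nth_default.
have <- : bpoly v (low y) (low z) = bpoly v y z.
  rewrite (@bpoly_line_at0 _ K0 _ _ (high y) _ (high z) (bpoly v y z)%:P) ?hornerC //.
  by move=> r r0; rewrite !lineE bpoly_v_scale ?weight0 ?expr0 ?mul1r ?hornerC // => j /andP[].
by apply: bpoly_v_local => -[|[|i]] lt_id; rewrite /low /P /pair2 //= lt_id.
Qed.

Lemma bpoly_v_dilate r y z : r != 0 ->
  bpoly v (fun i => r * y i) (fun i => r * z i) = r ^+ (l1 + l2) * bpoly v y z.
Proof. by move=> r0; rewrite !bpoly_v_pair2 hwF_homog1 // hwF_homog2 // exprD mulrA. Qed.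

Lemma lam_of_blin j : blin v j != 0 -> forall k, lam k = (k == j) :> nat.
Proof.
move=> vj k; have lt_jd : (j < d)%N.
  by rewrite ltnNge; apply: contra vj => le_dj; rewrite blin_v_out.
have [lt_kd|le_dk] := ltnP k d; last first.
  by rewrite lam_out // gtn_eqF // (leq_trans lt_jd le_dk).
have pred1_lt i : pred1 k i -> (i < d)%N by move/eqP ->.
have := @blin_v_scale (pred1 k) 2 j (two_neq0 K0) pred1_lt.
rewrite sum_ord_pred1 // => /(mulIf vj); rewrite /= eq_sym => two_lam.
by apply/esym/(expr2n_inj K0); rewrite -two_lam; case: (k == j); rewrite ?expr1 ?expr0.
Qed.

Lemma blin_v_neq0 j : blin v j != 0 -> [/\ j = 0%N, l1 = 1%N & l2 = 0%N].
Proof.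
move=> vj; have lamE := lam_of_blin vj.
have := lamE 0%N; have := lamE 1%N; have := lamE j; rewrite /part2 eqxx.
case: j {vj lamE} => [|[|j]] /=; first by move=> _ -> ->.
  by move=> _ l2_1 l1_0; move: le_l2l1; rewrite l2_1 l1_0.
by rewrite nth_nil.
Qed.

Lemma l1_gt0_of_lin0 : (forall j, blin v j = 0) -> (0 < l1)%N.
Proof.
move=> v_lin0; rewrite lt0n; apply/eqP => l1_0; case: v_hw => v_neq0 _ _; apply: v_neq0.
have l2_0 : l2 = 0%N by move: le_l2l1; rewrite l1_0 leqn0 => /eqP.
split=> [j|y z]; first exact: v_lin0.
by apply: (bpoly_eq0_of_homog K0 (k := 0)) => // r y' z' r0; rewrite bpoly_v_dilate // l1_0 l2_0.
Qed.

Lemma exists_hwF_normal_neq0 : (forall j, blin v j = 0) ->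
  exists p q, p != 0 /\ hwF p 0 q p^-1 != 0.
Proof.
move=> v_lin0; case: v_hw => v_neq0 _ _.
have [y [z vyz]] : exists y z, bpoly v y z != 0.
  apply: NNPP => all0; apply: v_neq0; split=> [j|y z]; first exact: v_lin0.
  by apply/eqP/negPn/negP => vyz; apply: all0; exists y, z.
rewrite bpoly_v_pair2 in vyz.
exact: (exists_F_normal_neq0 K0 hwF_homog2 hwF_shear hwF_line vyz).
Qed.

Definition shift_sub (m : nat) (i : nat) : bterm K :=
  if i == 0%N then tAdd (tVar 0%N) (tScale m%:R (tVar 1%N)) else tVar i.

Lemma bpoly_shift m y z : bpoly (bsubst (shift_sub m) v) y z =
  hwF (y 0%N + m%:R * y 1%N) (y 1%N) (z 0%N + m%:R * z 1%N) (z 1%N).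
Proof.
rewrite bpoly_subst_lin => [|i y' z']; last first.
  by rewrite /shift_sub; case: eqP => _ //=; rewrite mulr0 addr0.
by rewrite bpoly_v_pair2 /shift_sub.
Qed.

Local Notation n := (l1 - l2).+1.

(* the Lagrange interpolation of the shifted copies of v at the point where
   (y_1 + x y_2, z_1 + x z_2) is proportional to (p, q) *)
Definition interp (p q : K) y z : K :=
  \sum_(m < n) (\prod_(j < n | j != m)
     ((z 0%N * p - y 0%N * q) - j%:R * (y 1%N * q - z 1%N * p))) *
    ((\prod_(j < n | j != m) (m%:R - j%:R))^-1 * bpoly (bsubst (shift_sub m) v) y z).

Lemma interpE p q y z : (0 < l1)%N -> p != 0 -> y 1%N * q - z 1%N * p != 0 ->
  interp p q y z = (-1) ^+ (l1 + l2) * hwF p 0 q p^-1 * det2 y z ^+ l1.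
Proof.
move=> l1_gt0 p0 D0.
rewrite -(F_interpolation K0 le_l2l1 hwF_homog1 hwF_homog2 hwF_shear hwF_line
  (y 0%N) (z 0%N) l1_gt0 p0 D0).
by apply: eq_bigr => m _; rewrite bpoly_shift; ring.
Qed.

Variable f : bterm K.
Hypothesis v_in_Tideal : Tideal f v.

Lemma interp_in_Tideal p q : (forall j, blin v j = 0) -> in_Tideal_poly f (interp p q).
Proof.
move=> v_lin0; apply: in_Tideal_poly_sum => m; apply: multiplier_prod => [j|].
  apply: linear_form2_multiplier.
  by exists (- q), (- (j%:R * q)), p, (j%:R * p) => y z; ring.
apply: in_Tideal_polyZ; apply: in_Tideal_poly_bpoly; first exact: Tideal_subst.
by move=> i; rewrite blin_blinv blinv_subst blinv_eq0.
Qed.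

Lemma det2_in_Tideal_of_lin j : blin v j != 0 ->
  in_Tideal_poly f (fun y z => det2 y z ^+ l1).
Proof.
move=> vj; have [j0 l1_1 l2_0] := blin_v_neq0 vj.
have v_quad0 : forall y z, bpoly v y z = 0.
  by apply: (bpoly_eq0_of_homog K0 (k := 1)) => // r y z r0; rewrite bpoly_v_dilate // l1_1 l2_0.
have v_lin w : blinv v w = blin v 0 * w 0%N.
  rewrite (@blinv_sumE _ v (blin_bound v).+1) // big_ord_recl big1 ?addr0 // => i _.
  by have [->|/blin_v_neq0[]] := eqVneq (blin v (lift ord0 i)) 0; rewrite ?mul0r.
pose t := tAdd (tMul v (tVar 1%N)) (tScale (-1) (tMul (tVar 1%N) v)).
have It : in_Tideal_poly f (fun y z => blin v 0 * det2 y z).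
  exists t; split=> [|i|y z] /=.
  - by apply: TI_add; [apply: TI_mulr | apply: TI_scale; apply: TI_mull].
  - by rewrite mulr0 addr0.
  - by rewrite !v_lin !v_quad0 /det2; ring.
apply: in_Tideal_poly_ext (in_Tideal_polyZ (blin v 0)^-1 It) => y z.
by rewrite l1_1 expr1 mulrA mulVf ?mul1r // -j0.
Qed.

Lemma det2_in_Tideal_of_lin0 : (forall j, blin v j = 0) ->
  in_Tideal_poly f (fun y z => det2 y z ^+ l1).
Proof.
move=> v_lin0; have l1_gt0 := l1_gt0_of_lin0 v_lin0.
have [p [q [p0 Fpq]]] := exists_hwF_normal_neq0 v_lin0.
set kap := (-1) ^+ (l1 + l2) * hwF p 0 q p^-1.
have kap0 : kap != 0 by rewrite mulf_neq0 // expf_neq0 // oppr_eq0 oner_eq0.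
have [t [Tt t_lin t_interp]] := interp_in_Tideal p q v_lin0.
suff t_det2 y z : bpoly t y z = kap * det2 y z ^+ l1.
  apply: in_Tideal_poly_ext (in_Tideal_polyZ kap^-1 (in_Tideal_poly_bpoly Tt t_lin)).
  by move=> y z; rewrite t_det2 mulrA mulVf ?mul1r.
have [D0|D_neq0] := eqVneq (y 1%N * q - z 1%N * p) 0; last by rewrite t_interp interpE.
(* extend the identity from the points where y_2 q - z_2 p <> 0 along the line z + r e_2 *)
pose g := kap *: ((det2 y z)%:P + y 0%N *: 'X) ^+ l1.
have -> : kap * det2 y z ^+ l1 = g.[0].
  by rewrite hornerZ horner_exp hornerD hornerC hornerZ hornerX mulr0 addr0.
apply: (bpoly_line_at0 K0 (y' := fun _ => 0) (z' := basis_vec K 1)) => r r0.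
have -> : line y (fun _ => 0) r = y.
  by apply: functional_extensionality => i; rewrite /line mulr0 addr0.
rewrite t_interp interpE //.
  rewrite hornerZ horner_exp hornerD hornerC hornerZ hornerX /kap /det2 /line /basis_vec /=.
  by congr (_ * _ ^+ _); ring.
rewrite /line /basis_vec /= mulr1 mulrDl opprD addrA D0 sub0r oppr_eq0.
by rewrite mulf_neq0.
Qed.

Lemma det2_in_Tideal : in_Tideal_poly f (fun y z => det2 y z ^+ l1).
Proof.
have [[j /det2_in_Tideal_of_lin //]|no_lin] := classic (exists j, blin v j != 0).
apply: det2_in_Tideal_of_lin0 => j; apply/eqP/negPn/negP => vj.
by apply: no_lin; exists j.
Qed.

End HighestWeightVector.

Section IrreducibleModules.
Variables (K : fieldType) (d : nat) (f : bterm K).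

Lemma GLsubmodule_Tideal (M : bterm K -> Prop) : GLsubmodule d M ->
  GLsubmodule d (fun t => M t /\ Tideal f t).
Proof.
case=> M_beq M0 MD MZ [M_Fd M_gl]; split.
- by move=> t s [Mt Tt] ts; split; [apply: M_beq ts | apply: TI_eq ts].
- by split; [exact: M0 | exact: TI_zero].
- by move=> a b [Ma Ta] [Mb Tb]; split; [apply: MD | apply: TI_add].
- by move=> c a [Ma Ta]; split; [apply: MZ | apply: TI_scale].
- split=> [t [Mt _]|g t g_unit [Mt Tt]]; first exact: M_Fd.
  by split; [apply: M_gl | apply: Tideal_subst].
Qed.

Lemma irreducible_GL_sub_Tideal (M : bterm K -> Prop) : irreducible_GL d M ->
  M f -> ~ beq f tZero -> forall t, M t -> Tideal f t.
Proof.
case=> M_sub _ M_irr Mf f_neq0.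
case: (M_irr _ (GLsubmodule_Tideal M_sub)) => [t []//|f_triv|M_Tideal t /M_Tideal[]//].
by case: f_neq0; apply: f_triv; split; [exact: Mf | exact: Tideal_self].
Qed.

End IrreducibleModules.

Theorem lemma4p2 (K : fieldType) (Kchar0 : [pchar K] =i pred0)
  (d : nat) (M : bterm K -> Prop) (l1 l2 : nat) (hl : (l2 <= l1)%N)
  (hM : iso_W d M l1 l2) (f : bterm K) (hf : M f) (hf0 : ~ beq f tZero) :
  (forall m1 m2 j : nat, (m2 <= m1)%N -> (0 < m2)%N -> (l1 <= m2)%N ->
     (j <= m1 - m2)%N -> in_Tideal_poly f (wmu m1 m2 j))
  /\ in_Tideal_poly f (fun y z => (y 0%N * z 1%N - y 1%N * z 0%N) ^+ l1).
Proof.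
case: hM => M_irr lam_out [v [Mv v_hw]].
have v_Fd : inFd d v by case: M_irr => [[_ _ _ _ [M_Fd _]] _ _]; apply: M_Fd.
have Tv := irreducible_GL_sub_Tideal M_irr hf hf0 Mv.
have det2_l1 := det2_in_Tideal Kchar0 lam_out v_hw v_Fd hl Tv.
split=> [m1 m2 j _ _ le_l1m2 _|]; last exact: det2_l1.
have := multiplier_exp j (@in_Tideal_polyMy _ f 0)
  (multiplier_exp (m1 - m2 - j) (@in_Tideal_polyMz _ f 0)
  (multiplier_exp (m2 - l1) (@det2_multiplier _ f) det2_l1)).
apply: in_Tideal_poly_ext => y z.
by rewrite /wmu /det2 -exprD subnK //; ring.
Qed.
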